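(* Let $\mathcal C$ be a regular category and let $f\colon X\to Y$ be a level morphism of inverse systems in $\mathcal C$ with common index category $\mathcal I$ (so $f$ consists of morphisms $f_i\colon X_i\to Y_i$, $i\in\mathcal I$, commuting with the transition maps). For each $i$ let $X_i\to \operatorname{Im}(f_i)\to Y_i$ be the image decomposition of $f_i$ in $\mathcal C$. Then $$X\to \varprojlim_{i\in\mathcal I}\operatorname{Im}(f_i)\to Y$$ is the image decomposition of $f$ in $\operatorname{Pro}(\mathcal C)$, where $\varprojlim_{i\in\mathcal I}\operatorname{Im}(f_i)$ denotes the inverse system $i\mapsto \operatorname{Im}(f_i)$ (with transition maps induced by functoriality of the image decomposition) and the two morphisms are the level morphisms formed by the $X_i\to\operatorname{Im}(f_i)$ and $\operatorname{Im}(f_i)\to Y_i$. In particular, if every $f_i$ is a regular epimorphism in $\mathcal C$, then $f$ is a regular epimorphism in $\operatorname{Pro}(\mathcal C)$.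
   Context: For a category $\mathcal C$, $\operatorname{Pro}(\mathcal C)$ is its pro-completion: objects are inverse systems, i.e. functors $X\colon \mathcal I_X^{op}\to\mathcal C$ with $\mathcal I_X$ a small filtered category (written $i\mapsto X_i$), and $\operatorname{Hom}_{\operatorname{Pro}(\mathcal C)}(X,Y)=\varprojlim_{j\in\mathcal I_Y}\varinjlim_{i\in\mathcal I_X}\mathcal C(X_i,Y_j)$. A level morphism between inverse systems with the same index category $\mathcal I$ is a natural transformation, i.e. a family $f_i\colon X_i\to Y_i$ commuting with transition maps. A regular category is a finitely complete category in which kernel pairs have coequalizers and regular epimorphisms are stable under pullback; in such a category every morphism factors uniquely (up to unique isomorphism, functorially) as a regular epimorphism followed by a monomorphism (its image decomposition). *)

Set Implicit Arguments.
Unset Strict Implicit.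

Record Category : Type := {
  Ob :> Type;
  Hom : Ob -> Ob -> Type;
  idm : forall a, Hom a a;
  comp : forall x y z, Hom y z -> Hom x y -> Hom x z;
  comp_id_l : forall a b (f : Hom a b), comp (idm b) f = f;
  comp_id_r : forall a b (f : Hom a b), comp f (idm a) = f;
  comp_assoc : forall a b c0 d (f : Hom a b) (g : Hom b c0) (h : Hom c0 d),
      comp h (comp g f) = comp (comp h g) f
}.
Arguments Hom {c} _ _.
Arguments idm {c} _.
Arguments comp {c x y z} _ _.

Section Cat.
Variable C : Category.

Definition is_mono {a b : C} (m : Hom a b) : Prop :=
  forall w (u v : Hom w a), comp m u = comp m v -> u = v.

Definition is_coequalizer {a b q : C} (u v : Hom a b) (e : Hom b q) : Prop :=
  comp e u = comp e v /\
  forall z (g : Hom b z), comp g u = comp g v ->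
    exists h : Hom q z, comp h e = g /\ forall h' : Hom q z, comp h' e = g -> h' = h.

Definition is_regular_epi {b q : C} (e : Hom b q) : Prop :=
  exists (a : C) (u v : Hom a b), is_coequalizer u v e.

Definition is_terminal (t : C) : Prop :=
  forall a : C, exists h : Hom a t, forall h' : Hom a t, h' = h.

Definition is_pullback {A B Z P : C} (f : Hom A Z) (g : Hom B Z)
    (p1 : Hom P A) (p2 : Hom P B) : Prop :=
  comp f p1 = comp g p2 /\
  forall W (x : Hom W A) (y : Hom W B), comp f x = comp g y ->
    exists h : Hom W P, (comp p1 h = x /\ comp p2 h = y) /\
      forall h' : Hom W P, comp p1 h' = x -> comp p2 h' = y -> h' = h.

Definition finitely_complete : Prop :=
  (exists t : C, is_terminal t) /\
  forall (A B Z : C) (f : Hom A Z) (g : Hom B Z),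
    exists (P : C) (p1 : Hom P A) (p2 : Hom P B), is_pullback f g p1 p2.

Definition is_regular_category : Prop :=
  finitely_complete /\
  (forall (A Z P : C) (f : Hom A Z) (p1 p2 : Hom P A),
      is_pullback f f p1 p2 -> exists (Q : C) (q : Hom A Q), is_coequalizer p1 p2 q) /\
  (forall (A B Z P : C) (e : Hom A Z) (g : Hom B Z) (p1 : Hom P B) (p2 : Hom P A),
      is_regular_epi e -> is_pullback g e p1 p2 -> is_regular_epi p1).
End Cat.

Definition is_filtered (I : Category) : Prop :=
  (exists i : I, True) /\
  (forall i j : I, exists (k : I) (a : Hom i k) (b : Hom j k), True) /\
  (forall (i j : I) (u v : Hom i j), exists (k : I) (w : Hom j k), comp w u = comp w v).

Record InvSys (C : Category) (I : Category) := {
  sobj :> I -> C;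
  smap : forall i i' : I, Hom i i' -> Hom (sobj i') (sobj i);
  smap_id : forall i : I, smap (idm i) = idm (sobj i);
  smap_comp : forall (i i' i'' : I) (a : Hom i i') (b : Hom i' i''),
      smap (comp b a) = comp (smap a) (smap b)
}.
Arguments smap {C I} _ {i i'} _.

Definition is_level {C I : Category} (X Y : InvSys C I)
    (f : forall i : I, Hom (X i) (Y i)) : Prop :=
  forall (i i' : I) (a : Hom i i'), comp (smap Y a) (f i') = comp (f i) (smap X a).

Record ProObj (C : Category) := {
  pI : Category;
  pfilt : is_filtered pI;
  psys : InvSys C pI
}.
Arguments pI {C} _.
Arguments psys {C} _.

Section Pro.
Variable C : Category.

(* representatives of elements of colim_{i} C(X_i, Z) *)
Definition colim_rep (X : ProObj C) (Z : C) : Type :=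
  { i : pI X & Hom (psys X i) Z }.

Definition colim_eq (X : ProObj C) (Z : C) (p q : colim_rep X Z) : Prop :=
  exists (k : pI X) (a : Hom (projT1 p) k) (b : Hom (projT1 q) k),
    comp (projT2 p) (smap (psys X) a) = comp (projT2 q) (smap (psys X) b).

(* raw pro-morphism: a choice of representative for each j *)
Definition ProHom (X Y : ProObj C) : Type :=
  forall j : pI Y, colim_rep X (psys Y j).

(* compatibility: the family defines an element of lim_j colim_i C(X_i,Y_j) *)
Definition is_pro {X Y : ProObj C} (phi : ProHom X Y) : Prop :=
  forall (j j' : pI Y) (b : Hom j j'),
    colim_eq (existT _ (projT1 (phi j')) (comp (smap (psys Y) b) (projT2 (phi j'))))
             (phi j).

Definition pro_eq {X Y : ProObj C} (phi psi : ProHom X Y) : Prop :=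
  forall j, colim_eq (phi j) (psi j).

Definition pro_comp {X Y Z : ProObj C} (psi : ProHom Y Z) (phi : ProHom X Y)
  : ProHom X Z :=
  fun k => existT _ (projT1 (phi (projT1 (psi k))))
                    (comp (projT2 (psi k)) (projT2 (phi (projT1 (psi k))))).

Definition pro_is_mono {X Y : ProObj C} (m : ProHom X Y) : Prop :=
  is_pro m /\
  forall (W : ProObj C) (u v : ProHom W X), is_pro u -> is_pro v ->
    pro_eq (pro_comp m u) (pro_comp m v) -> pro_eq u v.

Definition pro_is_coequalizer {A B Q : ProObj C} (u v : ProHom A B) (e : ProHom B Q)
  : Prop :=
  pro_eq (pro_comp e u) (pro_comp e v) /\
  forall (Z : ProObj C) (g : ProHom B Z), is_pro g ->
    pro_eq (pro_comp g u) (pro_comp g v) ->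
    exists h : ProHom Q Z, is_pro h /\ pro_eq (pro_comp h e) g /\
      forall h' : ProHom Q Z, is_pro h' -> pro_eq (pro_comp h' e) g -> pro_eq h' h.

Definition pro_is_regular_epi {B Q : ProObj C} (e : ProHom B Q) : Prop :=
  is_pro e /\
  exists (A : ProObj C) (u v : ProHom A B), is_pro u /\ is_pro v /\
    pro_is_coequalizer u v e.

Definition mkPro {I : Category} (HI : is_filtered I) (X : InvSys C I) : ProObj C :=
  {| pI := I; pfilt := HI; psys := X |}.

Definition level_pro {I : Category} (HI : is_filtered I) (X Y : InvSys C I)
    (f : forall i : I, Hom (X i) (Y i)) : ProHom (mkPro HI X) (mkPro HI Y) :=
  fun j => existT (fun i : I => Hom (X i) (Y j)) j (f j).
End Pro.
Arguments is_level {C I} X Y f.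
Arguments level_pro {C I} HI X Y f _.

From Stdlib Require Import IndefiniteDescription.

(* The image part is levelwise: a level morphism of monos is a mono in Pro(C),
   and composites of level morphisms are computed levelwise.  The real content
   is that a level morphism [e] of regular epimorphisms is a regular epimorphism
   in Pro(C): it is the coequalizer of the level morphism of its levelwise kernel
   pairs.  Given [g] coequalizing that pair, each representative of [g] becomes,
   after a transition map, a morphism coequalizing a kernel pair of some [e k],
   hence factors through [e k]; these factorizations assemble into a
   pro-morphism because every [e k] is epi, which also gives uniqueness. *)

Set Implicit Arguments.
Unset Strict Implicit.

Ltac reassoc := repeat rewrite <- comp_assoc.

Section RegularEpis.
Variable C : Category.

Definition is_epi (b q : C) (e : Hom b q) : Prop :=
  forall z (x y : Hom q z), comp x e = comp y e -> x = y.

Lemma regular_epi_epi (b q : C) (e : Hom b q) : is_regular_epi e -> is_epi e.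
Proof.
  intros [a [u [v [He Hu]]]] z x y Hxy.
  destruct (Hu z (comp x e)) as [h [_ Hh]].
  { reassoc. rewrite He. reflexivity. }
  rewrite (Hh x eq_refl), (Hh y (eq_sym Hxy)). reflexivity.
Qed.

Lemma regular_epi_kernel_pair_coequalizer (A Z P : C) (e : Hom A Z) (p1 p2 : Hom P A) :
  is_regular_epi e -> is_pullback e e p1 p2 -> is_coequalizer p1 p2 e.
Proof.
  intros [W [u [v [Heq Hu]]]] [Hp Hpu].
  split; [exact Hp|].
  intros z g Hg.
  apply Hu.
  destruct (Hpu W u v Heq) as [t [[Ht1 Ht2] _]].
  rewrite <- Ht1, <- Ht2, !comp_assoc, Hg. reflexivity.
Qed.

Record kernel_pair (A Z : C) (f : Hom A Z) := {
  kp_obj :> C;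
  kp_fst : Hom kp_obj A;
  kp_snd : Hom kp_obj A;
  kp_pullback : is_pullback f f kp_fst kp_snd
}.

Definition choose_kernel_pair (HC : finitely_complete C) (A Z : C) (f : Hom A Z) :
  kernel_pair f.
Proof.
  destruct (constructive_indefinite_description _ (proj2 HC A A Z f f)) as [P HP].
  destruct (constructive_indefinite_description _ HP) as [p1 Hp1].
  destruct (constructive_indefinite_description _ Hp1) as [p2 Hp2].
  exact {| kp_pullback := Hp2 |}.
Defined.
End RegularEpis.

Section FilteredColimits.
Variables (C : Category) (X : ProObj C) (Z : C).
Implicit Types p q r : colim_rep X Z.

Lemma colim_eq_refl p : colim_eq p p.
Proof. exists (projT1 p), (idm _), (idm _). reflexivity. Qed.

Lemma colim_eq_sym p q : colim_eq p q -> colim_eq q p.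
Proof. intros [k [a [b H]]]. exists k, b, a. symmetry; exact H. Qed.

Lemma colim_eq_same_index (i : pI X) (x y : Hom (psys X i) Z) :
  colim_eq (existT _ i x) (existT _ i y) ->
  exists (k : pI X) (c : Hom i k), comp x (smap (psys X) c) = comp y (smap (psys X) c).
Proof.
  intros [k [a [b H]]]. cbn in *.
  destruct (pfilt X) as [_ [_ Hcoeq]].
  destruct (Hcoeq _ _ a b) as [k' [w Hw]].
  exists k', (comp w a).
  rewrite Hw at 2. rewrite !smap_comp, !comp_assoc, H. reflexivity.
Qed.

Lemma colim_eq_trans p q r : colim_eq p q -> colim_eq q r -> colim_eq p r.
Proof.
  intros [k1 [a1 [b1 H1]]] [k2 [a2 [b2 H2]]].
  destruct (pfilt X) as [_ [Hupper Hcoeq]].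
  destruct (Hupper k1 k2) as [k3 [c1 [c2 _]]].
  destruct (Hcoeq _ _ (comp c1 b1) (comp c2 a2)) as [k4 [w Hw]].
  exists k4, (comp w (comp c1 a1)), (comp w (comp c2 b2)).
  pose proof (f_equal (smap (psys X)) Hw) as Hw'.
  rewrite !smap_comp, <- !comp_assoc in Hw'.
  rewrite !smap_comp, !comp_assoc, H1, <- H2. reassoc. rewrite Hw'. reflexivity.
Qed.

Lemma colim_eq_transition (i k : pI X) (c : Hom i k) (x : Hom (psys X i) Z) :
  colim_eq (existT _ k (comp x (smap (psys X) c))) (existT _ i x).
Proof. exists k, (idm k), c. cbn. rewrite smap_id, comp_id_r. reflexivity. Qed.

Lemma colim_eq_postcomp (Z' : C) (z : Hom Z Z') p q :
  colim_eq p q ->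
  colim_eq (existT (fun i => Hom (psys X i) Z') (projT1 p) (comp z (projT2 p)))
           (existT (fun i => Hom (psys X i) Z') (projT1 q) (comp z (projT2 q))).
Proof. intros [k [a [b H]]]. exists k, a, b. cbn. reassoc. rewrite H. reflexivity. Qed.
End FilteredColimits.

Lemma is_pro_pro_eq (C : Category) (X Y : ProObj C) (phi psi : ProHom X Y) :
  pro_eq phi psi -> is_pro phi -> is_pro psi.
Proof.
  intros E Hphi j j' b.
  eapply colim_eq_trans; [| apply (E j)].
  eapply colim_eq_trans; [| apply (Hphi j j' b)].
  apply colim_eq_postcomp, colim_eq_sym, E.
Qed.

Section LevelMorphisms.
Variables (C I : Category) (HI : is_filtered I).

Lemma level_pro_is_pro (X Y : InvSys C I) (f : forall i, Hom (X i) (Y i)) :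
  is_level X Y f -> is_pro (level_pro HI X Y f).
Proof.
  intros Hf j j' b.
  exists j', (idm j'), b. cbn. rewrite smap_id, comp_id_r. apply Hf.
Qed.

Lemma level_pro_mono (X Y : InvSys C I) (m : forall i, Hom (X i) (Y i)) :
  is_level X Y m -> (forall i, is_mono (m i)) -> pro_is_mono (level_pro HI X Y m).
Proof.
  intros Hl Hm. split; [exact (level_pro_is_pro Hl)|].
  intros W u v _ _ H j. specialize (H j). unfold pro_comp, level_pro in H; cbn in H.
  destruct (u j) as [i x], (v j) as [i' y]; cbn in *.
  destruct H as [k [a [b H]]]. exists k, a, b. cbn in *.
  apply (Hm j). rewrite !comp_assoc. exact H.
Qed.

Lemma level_pro_comp (X Y Z : InvSys C I) (e : forall i, Hom (X i) (Y i))
    (m : forall i, Hom (Y i) (Z i)) (f : forall i, Hom (X i) (Z i)) :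
  (forall i, comp (m i) (e i) = f i) ->
  pro_eq (pro_comp (level_pro HI Y Z m) (level_pro HI X Y e)) (level_pro HI X Z f).
Proof. intros Hf j. unfold pro_comp, level_pro; cbn. rewrite Hf. apply colim_eq_refl. Qed.

Variables (X Q : InvSys C I) (e : forall i, Hom (X i) (Q i)).
Hypothesis e_level : is_level X Q e.

(* The action of [level_pro HI X Q e] on representatives: [pro_comp h
   (level_pro HI X Q e) j] is convertible to [level_precomp (h j)]. *)
Definition level_precomp (W : C) (p : colim_rep (mkPro HI Q) W) :
  colim_rep (mkPro HI X) W :=
  existT _ (projT1 p) (comp (projT2 p) (e (projT1 p))).

Section LevelEpi.
Hypothesis e_epi : forall i, is_epi (e i).

Lemma colim_eq_cancel_level_epi (W : C) (p q : colim_rep (mkPro HI Q) W) :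
  colim_eq (level_precomp p) (level_precomp q) -> colim_eq p q.
Proof.
  intros [k [a [b H]]]. exists k, a, b. cbn in *.
  apply (@e_epi k). reassoc. rewrite !e_level, !comp_assoc. exact H.
Qed.

Lemma is_pro_cancel_level_epi (Z : ProObj C) (h : ProHom (mkPro HI Q) Z) :
  is_pro (pro_comp h (level_pro HI X Q e)) -> is_pro h.
Proof.
  intros Hh j j' b. apply colim_eq_cancel_level_epi.
  eapply colim_eq_trans; [| exact (Hh j j' b)].
  cbn. rewrite comp_assoc. apply colim_eq_refl.
Qed.
End LevelEpi.

Section KernelPairs.
Variable kp : forall i, kernel_pair (e i).

Lemma kp_transition_cone (i i' : I) (a : Hom i i') :
  comp (e i) (comp (smap X a) (kp_fst (kp i'))) =
  comp (e i) (comp (smap X a) (kp_snd (kp i'))).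
Proof.
  rewrite !comp_assoc, <- e_level. reassoc.
  rewrite (proj1 (kp_pullback (kp i'))). reflexivity.
Qed.

Definition kp_transition (i i' : I) (a : Hom i i') : Hom (kp i') (kp i) :=
  proj1_sig (constructive_indefinite_description _
    (proj2 (kp_pullback (kp i)) _ _ _ (kp_transition_cone a))).

Lemma kp_transition_spec (i i' : I) (a : Hom i i') :
  (comp (kp_fst (kp i)) (kp_transition a) = comp (smap X a) (kp_fst (kp i')) /\
   comp (kp_snd (kp i)) (kp_transition a) = comp (smap X a) (kp_snd (kp i'))) /\
  forall h', comp (kp_fst (kp i)) h' = comp (smap X a) (kp_fst (kp i')) ->
             comp (kp_snd (kp i)) h' = comp (smap X a) (kp_snd (kp i')) ->
             h' = kp_transition a.
Proof.
  exact (proj2_sig (constructive_indefinite_description _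
    (proj2 (kp_pullback (kp i)) _ _ _ (kp_transition_cone a)))).
Qed.

Lemma kp_transition_id (i : I) : kp_transition (idm i) = idm (kp i).
Proof.
  symmetry. apply (proj2 (kp_transition_spec (idm i)));
    rewrite smap_id, comp_id_l, comp_id_r; reflexivity.
Qed.

Lemma kp_transition_comp (i i' i'' : I) (a : Hom i i') (b : Hom i' i'') :
  kp_transition (comp b a) = comp (kp_transition a) (kp_transition b).
Proof.
  symmetry.
  destruct (kp_transition_spec a) as [[A1 A2] _].
  destruct (kp_transition_spec b) as [[B1 B2] _].
  apply (proj2 (kp_transition_spec (comp b a))); rewrite smap_comp, !comp_assoc.
  - rewrite A1. reassoc. rewrite B1. reflexivity.
  - rewrite A2. reassoc. rewrite B2. reflexivity.
Qed.

Definition kernel_pair_system : InvSys C I := {|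
  sobj := fun i => kp_obj (kp i);
  smap := kp_transition;
  smap_id := kp_transition_id;
  smap_comp := kp_transition_comp
|}.

Lemma kp_fst_level : is_level kernel_pair_system X (fun i => kp_fst (kp i)).
Proof. intros i i' a. symmetry. exact (proj1 (proj1 (kp_transition_spec a))). Qed.

Lemma kp_snd_level : is_level kernel_pair_system X (fun i => kp_snd (kp i)).
Proof. intros i i' a. symmetry. exact (proj2 (proj1 (kp_transition_spec a))). Qed.

Let kp_fst_pro := level_pro HI kernel_pair_system X (fun i => kp_fst (kp i)).
Let kp_snd_pro := level_pro HI kernel_pair_system X (fun i => kp_snd (kp i)).

Hypothesis e_regular_epi : forall i, is_regular_epi (e i).

Lemma colim_rep_factor_level (W : C) (i : I) (x : Hom (X i) W) :
  colim_eq (X := mkPro HI kernel_pair_system)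
    (existT _ i (comp x (kp_fst (kp i)))) (existT _ i (comp x (kp_snd (kp i)))) ->
  exists p : colim_rep (mkPro HI Q) W, colim_eq (level_precomp p) (existT _ i x).
Proof.
  intros Hx.
  destruct (colim_eq_same_index Hx) as [k [c Hc]]; cbn in Hc.
  destruct (kp_transition_spec c) as [[Hfst Hsnd] _].
  rewrite <- !comp_assoc, Hfst, Hsnd, !comp_assoc in Hc.
  pose proof (regular_epi_kernel_pair_coequalizer (e_regular_epi k) (kp_pullback (kp k)))
    as [_ Hcoeq].
  destruct (Hcoeq _ _ Hc) as [h [Hh _]].
  exists (existT _ k h). unfold level_precomp; cbn. rewrite Hh.
  apply (colim_eq_transition (X := mkPro HI X)).
Qed.

Lemma level_pro_factor (Z : ProObj C) (g : ProHom (mkPro HI X) Z) :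
  pro_eq (pro_comp g kp_fst_pro) (pro_comp g kp_snd_pro) ->
  exists h : ProHom (mkPro HI Q) Z, pro_eq (pro_comp h (level_pro HI X Q e)) g.
Proof.
  intros Hg.
  assert (Hj : forall j, exists p, colim_eq (level_precomp p) (g j)).
  { intro j. specialize (Hg j). unfold pro_comp, level_pro in Hg.
    destruct (g j) as [i x]. exact (colim_rep_factor_level Hg). }
  exists (fun j => proj1_sig (constructive_indefinite_description _ (Hj j))).
  intro j. exact (proj2_sig (constructive_indefinite_description _ (Hj j))).
Qed.

Lemma level_pro_kernel_pair_coequalizer :
  pro_is_coequalizer kp_fst_pro kp_snd_pro (level_pro HI X Q e).
Proof.
  assert (e_epi : forall i, is_epi (e i)) by (intro; apply regular_epi_epi, e_regular_epi).
  split.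
  { intro j. unfold pro_comp, level_pro; cbn. rewrite (proj1 (kp_pullback (kp j))).
    apply colim_eq_refl. }
  intros Z g Hg Hgq.
  destruct (level_pro_factor Hgq) as [h Hh].
  exists h. split; [|split; [exact Hh|]].
  - apply (is_pro_cancel_level_epi e_epi).
    apply (is_pro_pro_eq (phi := g)); [intro j; apply colim_eq_sym, Hh | exact Hg].
  - intros h' _ Hh' j. apply (colim_eq_cancel_level_epi e_epi).
    eapply colim_eq_trans; [exact (Hh' j)|]. apply colim_eq_sym, Hh.
Qed.
End KernelPairs.
End LevelMorphisms.

Lemma level_pro_regular_epi (C : Category) (HC : finitely_complete C)
    (I : Category) (HI : is_filtered I) (X Q : InvSys C I)
    (e : forall i, Hom (X i) (Q i)) :
  is_level X Q e -> (forall i, is_regular_epi (e i)) ->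
  pro_is_regular_epi (level_pro HI X Q e).
Proof.
  intros He Hreg.
  pose (kp := fun i => choose_kernel_pair HC (e i)).
  split; [exact (level_pro_is_pro (HI:=HI) He)|].
  pose (KP := kernel_pair_system He kp).
  exists (mkPro HI KP), (level_pro HI KP X (fun i => kp_fst (kp i))),
    (level_pro HI KP X (fun i => kp_snd (kp i))).
  split; [exact (level_pro_is_pro (kp_fst_level He kp))|].
  split; [exact (level_pro_is_pro (kp_snd_level He kp))|].
  exact (level_pro_kernel_pair_coequalizer HI He kp Hreg).
Qed.

Theorem mainTheorem1 (C : Category) (HC : is_regular_category C)
    (I : Category) (HI : is_filtered I) (X Y : InvSys C I)
    (f : forall i : I, Hom (X i) (Y i)) (Hf : is_level X Y f) :
  (forall (Im : InvSys C I)
          (e : forall i : I, Hom (X i) (Im i)) (m : forall i : I, Hom (Im i) (Y i)),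
      is_level X Im e -> is_level Im Y m ->
      (forall i, is_regular_epi (e i) /\ is_mono (m i) /\ comp (m i) (e i) = f i) ->
      pro_is_regular_epi (level_pro HI X Im e) /\
      pro_is_mono (level_pro HI Im Y m) /\
      pro_eq (pro_comp (level_pro HI Im Y m) (level_pro HI X Im e))
             (level_pro HI X Y f)) /\
  ((forall i, is_regular_epi (f i)) -> pro_is_regular_epi (level_pro HI X Y f)).
Proof.
  destruct HC as [HC _].
  split.
  - intros Im e m He Hm Hfact.
    split; [apply (level_pro_regular_epi HC HI He); apply Hfact|].
    split; [apply (level_pro_mono HI Hm); apply Hfact|].
    apply level_pro_comp, Hfact.
  - exact (level_pro_regular_epi HC HI Hf).
Qed.
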